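(* Let $d\ge 1$ and let $\mathcal{C}$ be a chordal $d$-uniform clutter on the vertex set $[n]$ with a simplicial order $e_1,\ldots,e_r$, and let $\{N_1,\ldots,N_r\}$ be the simplicial multiset associated with this order. Put $M_i=\sum_{k=1}^r\binom{N_k}{i}$ and let $\Delta=\Delta(\mathcal{C})$ be the clique complex of $\mathcal{C}$. Then \[ \mathbf{f}_\Delta(t)=\sum_{i=0}^{d-1}\binom{n}{i}t^i+t^{d-1}\sum_{i\ge 1}M_i t^i=\sum_{i=0}^{d-1}\binom{n}{i}t^i+t^{d-1}\sum_{i=1}^{r}\big((1+t)^{N_i}-1\big). \] In particular, $\dim\Delta=\max\{N_1,\ldots,N_r\}+(d-2)$.
   Context: A $d$-uniform clutter $\mathcal{C}$ on $[n]$ is a set of $d$-element subsets of $[n]$ (its circuits). A $(d-1)$-subset $e\subset[n]$ is a submaximal circuit of $\mathcal{C}$ if $e\subset F$ for some $F\in\mathcal{C}$. A subset $V\subseteq[n]$ is a clique of $\mathcal{C}$ if every $d$-subset of $V$ belongs to $\mathcal{C}$ (subsets with fewer than $d$ elements are cliques). The clique complex $\Delta(\mathcal{C})$ is the simplicial complex of all cliques. For a $(d-1)$-subset $e$, the open neighborhood is $\mathrm{N}_{\mathcal{C}}(e)=\{c\in[n]: e\cup\{c\}\in\mathcal{C}\}$ and the closed neighborhood is $\mathrm{N}_{\mathcal{C}}[e]=e\cup\mathrm{N}_{\mathcal{C}}(e)$; $e$ is simplicial in $\mathcal{C}$ if $e$ is a submaximal circuit of $\mathcal{C}$ and $\mathrm{N}_{\mathcal{C}}[e]$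 is a clique of $\mathcal{C}$. The deletion is $\mathcal{C}\setminus e=\{F\in\mathcal{C}: e\not\subset F\}$, and $\mathcal{C}_{e_1\cdots e_i}=(\cdots((\mathcal{C}\setminus e_1)\setminus e_2)\cdots)\setminus e_i$. A simplicial order of $\mathcal{C}$ is a sequence $e_1,\ldots,e_r$ of $(d-1)$-subsets such that $e_1$ is simplicial in $\mathcal{C}$, $e_i$ is simplicial in $\mathcal{C}_{e_1\cdots e_{i-1}}$ for $i>1$, and $\mathcal{C}_{e_1\cdots e_r}=\emptyset$; $\mathcal{C}$ is chordal if it admits a simplicial order (the empty clutter is chordal). The simplicial multiset of the order is $\{N_1,\ldots,N_r\}$ with $N_1=|\mathrm{N}_{\mathcal{C}}(e_1)|$ and $N_i=|\mathrm{N}_{\mathcal{C}_{e_1\cdots e_{i-1}}}(e_i)|$ for $i>1$. For a simplicial complex $\Delta$ with $f_{i}$ faces of dimension $i$ (so $f_{i-1}$ faces of cardinality $i$, $f_{-1}=1$), the $\mathbf{f}$-polynomial is $\mathbf{f}_\Delta(t)=\sum_{i\ge0}f_{i-1}t^i$. *)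

From mathcomp Require Import all_boot all_order all_algebra.
Set Implicit Arguments. Unset Strict Implicit. Unset Printing Implicit Defensive.
Import GRing.Theory.

Section Clutter.
Variable n : nat.
Notation V := 'I_n.

Definition uniform_clutter (d : nat) (C : {set {set V}}) : bool :=
  [forall F in C, #|F| == d].

Definition submaximal (d : nat) (C : {set {set V}}) (e : {set V}) : bool :=
  (#|e| == d.-1) && [exists F in C, e \subset F].

Definition is_clique (d : nat) (C : {set {set V}}) (W : {set V}) : bool :=
  [forall S : {set V}, ((S \subset W) && (#|S| == d)) ==> (S \in C)].

Definition clique_complex (d : nat) (C : {set {set V}}) : {set {set V}} :=
  [set W | is_clique d C W].

Definition open_nbhd (C : {set {set V}}) (e : {set V}) : {set V} :=
  [set c | e :|: [set c] \in C].
Definition closed_nbhd (C : {set {set V}}) (e : {set V}) : {set V} :=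
  e :|: open_nbhd C e.

Definition simplicial (d : nat) (C : {set {set V}}) (e : {set V}) : bool :=
  submaximal d C e && is_clique d C (closed_nbhd C e).

Definition deletion (C : {set {set V}}) (e : {set V}) : {set {set V}} :=
  [set F in C | ~~ (e \subset F)].

Fixpoint simplicial_order (d : nat) (C : {set {set V}}) (es : seq {set V}) : bool :=
  match es with
  | [::] => C == set0
  | e :: es' => simplicial d C e && simplicial_order d (deletion C e) es'
  end.

Fixpoint simplicial_multiset (C : {set {set V}}) (es : seq {set V}) : seq nat :=
  match es with
  | [::] => [::]
  | e :: es' => #|open_nbhd C e| :: simplicial_multiset (deletion C e) es'
  end.

(* f-polynomial: sum over faces of t^(cardinality) = sum_i f_(i-1) t^i *)
Definition fpoly (D : {set {set V}}) : {poly int} :=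
  \sum_(W in D) 'X^#|W|.

Definition cdim (D : {set {set V}}) : int :=
  (\max_(W in D) #|W|)%:Z - 1.

End Clutter.

(** Deleting a simplicial submaximal circuit [e] with open neighbourhood [N]
    removes from the clique complex exactly the faces [e :|: A], [A] a
    nonempty subset of [N]: these are cliques because [e :|: N] is one, and
    conversely every extra vertex of a clique of size at least [d] containing
    [e] lies in [N].  So one deletion changes the f-polynomial by
    [t^(d-1) ((1 + t)^#|N| - 1)] and the largest face size by a [maxn] with
    [d - 1 + #|N|]; once the clutter is empty the faces are all sets of fewer
    than [d] vertices. *)
From mathcomp Require Import all_boot all_order all_algebra.
From mathcomp Require Import zify.
Import GRing.Theory.
Set Implicit Arguments. Unset Strict Implicit. Unset Printing Implicit Defensive.
Local Open Scope ring_scope.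

Section Clutters.
Variables (n d : nat).
Notation V := 'I_n.

Lemma cliqueP (C : {set {set V}}) (W : {set V}) :
  reflect (forall S : {set V}, S \subset W -> #|S| = d -> S \in C)
          (is_clique d C W).
Proof.
apply: (iffP forallP) => [H S SW Sd | H S].
  by have := H S; rewrite SW Sd eqxx.
by apply/implyP => /andP[SW /eqP Sd]; apply: H.
Qed.

Lemma clique_subset (C : {set {set V}}) (W W' : {set V}) :
  W' \subset W -> is_clique d C W -> is_clique d C W'.
Proof.
move=> sW'W /cliqueP cliqueW; apply/cliqueP => S SW' Sd.
exact: cliqueW (subset_trans SW' sW'W) Sd.
Qed.

Lemma exists_subset_card (W : {set V}) (k : nat) :
  (k <= #|W|)%N -> exists2 S : {set V}, S \subset W & #|S| = k.
Proof.
move=> kW.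
have : (0 < #|[set S : {set V} | S \subset W & #|S| == k]|)%N.
  by rewrite cards_draws bin_gt0.
by rewrite card_gt0 => /set0Pn[S]; rewrite inE => /andP[SW /eqP Sk]; exists S.
Qed.

Lemma clique_set0 (W : {set V}) : is_clique d set0 W = (#|W| < d)%N.
Proof.
apply/cliqueP/idP => [cliqueW | Wd S SW Sd].
  rewrite ltnNge; apply/negP => /exists_subset_card[S SW Sd].
  by have := cliqueW S SW Sd; rewrite inE.
by move: (subset_leq_card SW); rewrite Sd leqNgt Wd.
Qed.

Lemma uniform_clutter_deletion (C : {set {set V}}) (e : {set V}) :
  uniform_clutter d C -> uniform_clutter d (deletion C e).
Proof.
move=> /forallP unifC; apply/forallP => F; rewrite inE.
by apply/implyP => /andP[FC _]; exact: implyP (unifC F) FC.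
Qed.

End Clutters.

Section SubsetSums.
Variables (T : finType) (R : pzRingType) (x : R).

Lemma sum_expr_card (P : pred {set T}) (m : nat) :
  (forall A, P A -> #|A| <= m)%N ->
  \sum_(A | P A) x ^+ #|A| =
  \sum_(i < m.+1) x ^+ i *+ #|[set A | P A & #|A| == i]|.
Proof.
move=> le_m.
rewrite (partition_big (fun A : {set T} => inord #|A| : 'I_m.+1) xpredT) //=.
apply: eq_bigr => i _; rewrite -sumr_const; apply: eq_big => [A|A].
  rewrite inE; case PA: (P A) => //=.
  by rewrite -(inj_eq val_inj) /= inordK // ltnS le_m.
by case/andP=> PA /eqP <-; rewrite inordK // ltnS le_m.
Qed.

Lemma sum_expr_card_subset (S : {set T}) :
  \sum_(A : {set T} | A \subset S) x ^+ #|A| = (x + 1) ^+ #|S|.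
Proof.
rewrite (@sum_expr_card _ #|S|) => [|A]; last exact: subset_leq_card.
by rewrite exprD1n; apply: eq_bigr => i _; rewrite cards_draws.
Qed.

Lemma sum_expr_card_subset_neq0 (S : {set T}) :
  \sum_(A : {set T} | (A \subset S) && (A != set0)) x ^+ #|A| =
  (x + 1) ^+ #|S| - 1.
Proof.
rewrite -sum_expr_card_subset [in RHS](bigD1 set0) ?sub0set //=.
by rewrite cards0 addrC addrK.
Qed.

End SubsetSums.

Lemma fpoly_clique_complex_set0 (n d : nat) :
  fpoly (clique_complex (n:=n) d set0) = \sum_(i < d) 'C(n, i)%:R *: 'X^i.
Proof.
case: d => [|d].
  by rewrite big_ord0 /fpoly big_pred0 // => W; rewrite inE clique_set0.
rewrite /fpoly (eq_bigl (fun W : {set 'I_n} => #|W| < d.+1)%N); last first.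
  by move=> W; rewrite inE clique_set0.
rewrite (@sum_expr_card _ _ _ _ d) //; apply: eq_bigr => i _.
rewrite scaler_nat -[n in 'C(n, _)]card_ord -card_draws; congr (_ *+ _).
by apply: eq_card => A; rewrite !inE andb_idl // => /eqP ->.
Qed.

Lemma bigmax_card_clique_complex_set0 (n d : nat) :
  (\max_(W in clique_complex (n:=n) d set0) #|W| <= d.-1)%N.
Proof. by apply/bigmax_leqP => W; rewrite inE clique_set0; case: d. Qed.

Lemma exprD1n_sub1 (R : pzRingType) (x : R) (k m : nat) : (k <= m)%N ->
  (x + 1) ^+ k - 1 = \sum_(1 <= i < m.+1) x ^+ i *+ 'C(k, i).
Proof.
move=> le_km; rewrite exprD1n big_ord_recl expr0 bin0 mulr1n [1 + _]addrC addrK.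
rewrite big_add1 succnK big_mkord.
rewrite (eq_bigr (fun i : 'I_k => x ^+ i.+1 *+ 'C(k, i.+1))) //.
rewrite (big_ord_widen _ (fun i => x ^+ i.+1 *+ 'C(k, i.+1)) le_km) big_mkcond.
apply: eq_bigr => i _; case: ifP => // /negbT; rewrite -leqNgt => lt_ki.
by rewrite bin_small.
Qed.

Lemma bigmax_addn_seq (a : nat) (s : seq nat) : s != [::] ->
  (\max_(j <- s) (a + j) = a + \max_(j <- s) j)%N.
Proof.
elim: s => // k [|j s] IH _; first by rewrite !big_seq1.
by rewrite big_cons IH // [in RHS]big_cons addn_maxr.
Qed.

Section Deletion.
Variables (n d : nat) (C : {set {set 'I_n}}) (e : {set 'I_n}).
Hypotheses (d_gt0 : (0 < d)%N) (unifC : uniform_clutter d C)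
  (simpl_e : simplicial d C e).
Notation N := (open_nbhd C e).

Lemma card_circuit F : F \in C -> #|F| = d.
Proof. by move=> FC; move/forallP: unifC => /(_ F) /implyP /(_ FC) /eqP. Qed.

Lemma card_simplicial : #|e| = d.-1.
Proof. by case/andP: simpl_e => /andP[/eqP]. Qed.

Lemma card_setU1_simplicial c : c \notin e -> #|e :|: [set c]| = d.
Proof.
by move=> ce; rewrite setUC cardsU1 ce card_simplicial add1n prednK.
Qed.

Lemma notin_open_nbhd c : c \in N -> c \notin e.
Proof.
rewrite inE => /card_circuit; apply: contra_eqN => ce.
by rewrite (setUidPl _) ?sub1set // card_simplicial; have := prednK d_gt0; lia.
Qed.

Lemma disjoint_open_nbhd (A : {set 'I_n}) : A \subset N -> e :&: A = set0.
Proof.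
move=> AN; apply/setP => x; rewrite !inE andbC.
by case xA: (x \in A) => //=; rewrite (negbTE (notin_open_nbhd (subsetP AN x xA))).
Qed.

Lemma card_setU_open_nbhd (A : {set 'I_n}) :
  A \subset N -> #|e :|: A| = (d.-1 + #|A|)%N.
Proof.
by move=> AN; rewrite cardsU disjoint_open_nbhd // cards0 subn0 card_simplicial.
Qed.

Definition covers (W : {set 'I_n}) := (e \subset W) && (d <= #|W|)%N.

Lemma exists_setD_simplicial (W : {set 'I_n}) :
  covers W -> exists2 c, c \in W & c \notin e.
Proof.
case/andP=> eW dW; have : e \proper W.
  by rewrite properEcard eW card_simplicial prednK.
by case/properP => _ [c cW ce]; exists c.
Qed.

Lemma open_nbhd_neq0 : N != set0.
Proof.
case/andP: simpl_e => /andP[_ /existsP[F /andP[FC eF]]] _.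
have [c cF ce] : exists2 c, c \in F & c \notin e.
  by apply: exists_setD_simplicial; rewrite /covers eF (card_circuit FC) /=.
apply/set0Pn; exists c; rewrite inE.
suff -> : e :|: [set c] = F by [].
apply/eqP; rewrite eqEcard subUset eF sub1set cF.
by rewrite card_setU1_simplicial // (card_circuit FC) leqnn.
Qed.

Lemma clique_deletion (W : {set 'I_n}) :
  is_clique d (deletion C e) W = is_clique d C W && ~~ covers W.
Proof.
apply/idP/andP => [cliqueW | [/cliqueP cliqueW coverW]]; last first.
  apply/cliqueP => S SW Sd; rewrite inE cliqueW //=.
  apply: contra coverW => eS; rewrite /covers (subset_trans eS SW).
  by rewrite -Sd subset_leq_card.
split.
  apply/cliqueP => S SW Sd; move/cliqueP: cliqueW => /(_ S SW Sd).
  by rewrite inE => /andP[].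
apply/negP => coverW; have [c cW ce] := exists_setD_simplicial coverW.
move/cliqueP: cliqueW => /(_ (e :|: [set c])).
rewrite subUset sub1set cW card_setU1_simplicial // inE subsetUl andbF.
by case/andP: coverW => -> _ /(_ erefl erefl).
Qed.

(* The third conjunct makes [W |-> W :\: e] inverse to [A |-> e :|: A]. *)
Lemma clique_covers (A : {set 'I_n}) :
  [&& is_clique d C (e :|: A), covers (e :|: A) & (e :|: A) :\: e == A] =
  (A \subset N) && (A != set0).
Proof.
apply/idP/andP => [/and3P[/cliqueP cliqueeA /andP[_ deA] /eqP eAe] | [AN A0]].
  have Ae c : c \in A -> c \notin e by rewrite -eAe inE => /andP[].
  split.
    apply/subsetP => c cA; rewrite inE; apply: cliqueeA.
      by rewrite setUS // sub1set.
    exact: card_setU1_simplicial (Ae c cA).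
  apply: contraTneq deA => ->; rewrite setU0 card_simplicial.
  by have := prednK d_gt0; lia.
have eAe : (e :|: A) :\: e = A.
  rewrite setDUl setDv set0U; apply/setDidPl.
  by rewrite disjoint_sym -setI_eq0 disjoint_open_nbhd.
rewrite eAe eqxx andbT /covers subsetUl card_setU_open_nbhd //.
rewrite (@clique_subset _ _ _ (closed_nbhd C e)) ?setUS //.
  by move: A0 (prednK d_gt0); rewrite -card_gt0; lia.
by case/andP: simpl_e.
Qed.

Lemma big_clique_complex_deletion (R : Type) (idx : R)
    (op : Monoid.com_law idx) (F : nat -> R) :
  \big[op/idx]_(W in clique_complex d C) F #|W| =
  op (\big[op/idx]_(W in clique_complex d (deletion C e)) F #|W|)
     (\big[op/idx]_(A : {set 'I_n} | (A \subset N) && (A != set0))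
        F (d.-1 + #|A|)%N).
Proof.
rewrite (bigID covers) Monoid.mulmC /=; congr (op _ _).
  by apply: eq_bigl => W; rewrite !inE clique_deletion.
rewrite (reindex_onto (fun A => e :|: A) (fun W => W :\: e)) /=; last first.
  move=> W /andP[_ /andP[eW _]].
  by rewrite setDE setUIr setUCr setIT; apply/setUidPr.
apply: eq_big => A; first by rewrite inE -andbA clique_covers.
by rewrite inE -andbA clique_covers => /andP[AN _]; rewrite card_setU_open_nbhd.
Qed.

Lemma fpoly_clique_complex_deletion :
  fpoly (clique_complex d C) =
  fpoly (clique_complex d (deletion C e)) + 'X^(d.-1) * (('X + 1) ^+ #|N| - 1).
Proof.
rewrite /fpoly (big_clique_complex_deletion +%R (fun k => 'X^k)) /=.
congr (_ + _); rewrite -sum_expr_card_subset_neq0 mulr_sumr.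
by apply: eq_bigr => A _; rewrite exprD.
Qed.

Lemma bigmax_card_clique_complex_deletion :
  (\max_(W in clique_complex d C) #|W| =
   maxn (\max_(W in clique_complex d (deletion C e)) #|W|) (d.-1 + #|N|))%N.
Proof.
rewrite (big_clique_complex_deletion maxn (fun k => k)) /=; congr maxn.
apply/eqP; rewrite eqn_leq; apply/andP; split.
  by apply/bigmax_leqP => A /andP[AN _]; rewrite leq_add2l subset_leq_card.
by apply: (leq_bigmax_cond N); rewrite subxx open_nbhd_neq0.
Qed.

End Deletion.

Section SimplicialOrder.
Variables (n d : nat).
Hypothesis d_gt0 : (0 < d)%N.

Lemma fpoly_simplicial_order (C : {set {set 'I_n}}) (es : seq {set 'I_n}) :
  uniform_clutter d C -> simplicial_order d C es ->
  fpoly (clique_complex d C) = fpoly (clique_complex (n:=n) d set0) +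
    'X^(d.-1) * \sum_(k <- simplicial_multiset C es) (('X + 1) ^+ k - 1).
Proof.
elim: es C => [|e es IH] C unifC /=.
  by move/eqP->; rewrite big_nil mulr0 addr0.
case/andP=> simpl_e order_es.
rewrite (fpoly_clique_complex_deletion d_gt0 unifC simpl_e).
rewrite IH ?uniform_clutter_deletion // big_cons -addrA; congr (_ + _).
by rewrite addrC -mulrDr.
Qed.

Lemma bigmax_card_simplicial_order (C : {set {set 'I_n}}) (es : seq {set 'I_n}) :
  uniform_clutter d C -> simplicial_order d C es ->
  (\max_(W in clique_complex d C) #|W| =
   maxn (\max_(W in clique_complex (n:=n) d set0) #|W|)
        (\max_(k <- simplicial_multiset C es) (d.-1 + k)))%N.
Proof.
elim: es C => [|e es IH] C unifC /=.
  by move/eqP->; rewrite big_nil maxn0.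
case/andP=> simpl_e order_es.
rewrite (bigmax_card_clique_complex_deletion d_gt0 unifC simpl_e).
by rewrite IH ?uniform_clutter_deletion // big_cons -maxnA (maxnC (d.-1 + _)).
Qed.

End SimplicialOrder.

Theorem proposition2p1 (d n : nat) (C : {set {set 'I_n}}) (es : seq {set 'I_n}) :
  (1 <= d)%N ->
  uniform_clutter d C ->
  simplicial_order d C es ->
  let Ns := simplicial_multiset C es in
  let M := fun i : nat => (\sum_(k <- Ns) 'C(k, i))%N in
  let Delta := clique_complex d C in
  [/\ fpoly Delta =
        \sum_(i < d) ('C(n, i))%:R *: 'X^i
        + 'X^(d.-1) * \sum_(1 <= i < (\max_(k <- Ns) k).+1) (M i)%:R *: 'X^i,
      fpoly Delta =
        \sum_(i < d) ('C(n, i))%:R *: 'X^i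
        + 'X^(d.-1) * \sum_(k <- Ns) (('X + 1) ^+ k - 1)
    & C != set0 ->
      cdim Delta = (\max_(k <- Ns) k)%:Z + (d%:Z - 2)].
Proof.
move=> d_gt0 unifC order_es Ns M Delta.
have fpoly_Delta : fpoly Delta = \sum_(i < d) 'C(n, i)%:R *: 'X^i
    + 'X^(d.-1) * \sum_(k <- Ns) (('X + 1) ^+ k - 1).
  by rewrite (fpoly_simplicial_order d_gt0 unifC order_es) fpoly_clique_complex_set0.
split=> // [|C_neq0].
  rewrite fpoly_Delta; congr (_ + _ * _).
  rewrite (eq_big_seq (fun k => \sum_(1 <= i < (\max_(k <- Ns) k).+1)
                                  'X^i *+ 'C(k, i))) => [|k k_Ns]; last first.
    by rewrite (exprD1n_sub1 _ (@leq_bigmax_seq _ Ns xpredT id k k_Ns isT)).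
  rewrite exchange_big /=; apply: eq_bigr => i _.
  by rewrite scaler_nat sumrMnr.
have Ns_neq0 : Ns != [::].
  by move: order_es C_neq0; rewrite /Ns; case: (es) => [/eqP ->|]; rewrite ?eqxx.
rewrite /cdim (bigmax_card_simplicial_order d_gt0 unifC order_es) -/Ns.
rewrite bigmax_addn_seq // (maxn_idPr _); last first.
  exact: leq_trans (bigmax_card_clique_complex_set0 n d) (leq_addr _ _).
by have := prednK d_gt0; lia.
Qed.
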